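(* Let $L$ be a real $n\times n$ matrix with nonpositive off-diagonal entries and nonnegative row sums (i.e. $\sum_{j}L_{ij}\ge 0$ for every $i$). If $f\in\mathbb{Z}^n$ with $f\ge 0$ is $\chi$-superstable with respect to $L$, then $f$ is $z$-superstable with respect to $L$.
   Context: Vector inequalities are entrywise. A vector $f\in\mathbb{Z}^n$ with $f\ge0$ is $\chi$-superstable with respect to $L$ if for every $\chi\in\{0,1\}^n$ with $\chi\ne 0$ there exists $i$ with $f_i-(L\chi)_i<0$. A vector $f\in\mathbb{Z}^n$ with $f\ge 0$ is $z$-superstable with respect to $L$ if for every $z\in\mathbb{Z}^n$ with $z\ge0$ and $z\ne0$ there exists $i$ with $f_i-(Lz)_i<0$. *)

(* Real matrices are modelled over an arbitrary
   realFieldType R (the statement is purely order-algebraic). *)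
From HB Require Import structures.
From mathcomp Require Import all_boot all_order all_algebra.
Set Implicit Arguments. Unset Strict Implicit. Unset Printing Implicit Defensive.
Import Order.TTheory GRing.Theory Num.Theory.
Local Open Scope ring_scope.

Definition intvec (R : realFieldType) (n : nat) (v : 'cV[int]_n) : 'cV[R]_n :=
  map_mx (fun z : int => z%:~R) v.

Definition offdiag_nonpos (R : realFieldType) (n : nat) (L : 'M[R]_n) : Prop :=
  forall i j : 'I_n, i != j -> L i j <= 0.

Definition rowsum_nonneg (R : realFieldType) (n : nat) (L : 'M[R]_n) : Prop :=
  forall i : 'I_n, 0 <= \sum_(j < n) L i j.

Definition nonneg_vec (n : nat) (f : 'cV[int]_n) : Prop :=
  forall i : 'I_n, 0 <= f i 0.

Definition chi_superstable (R : realFieldType) (n : nat) (L : 'M[R]_n)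
  (f : 'cV[int]_n) : Prop :=
  nonneg_vec f /\
  forall chi : 'cV[int]_n,
    (forall i, chi i 0 = 0 \/ chi i 0 = 1) -> chi != 0 ->
    exists i : 'I_n, (f i 0)%:~R - (L *m intvec R chi) i 0 < 0.

Definition z_superstable (R : realFieldType) (n : nat) (L : 'M[R]_n)
  (f : 'cV[int]_n) : Prop :=
  nonneg_vec f /\
  forall z : 'cV[int]_n,
    nonneg_vec z -> z != 0 ->
    exists i : 'I_n, (f i 0)%:~R - (L *m intvec R z) i 0 < 0.

(* Let z >= 0 be nonzero with maximal entry m >= 1, and let chi be the
   indicator of the entries of z equal to m. By chi-superstability some row i
   has f_i < (L chi)_i. Off the support of chi that row of L chi is <= 0, so
   z_i = m; then w = z - chi attains its maximum m - 1 >= 0 at i, and a row of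
   L applied to a vector at its nonnegative maximum is nonnegative. Hence
   (L z)_i = (L w)_i + (L chi)_i >= (L chi)_i > f_i. *)
From HB Require Import structures.
From mathcomp Require Import all_boot all_order all_algebra.
Set Implicit Arguments. Unset Strict Implicit. Unset Printing Implicit Defensive.
Import Order.TTheory GRing.Theory Num.Theory.
Local Open Scope ring_scope.

Lemma intvecD (R : realFieldType) (n : nat) (u v : 'cV[int]_n) :
  intvec R (u + v) = intvec R u + intvec R v.
Proof. exact: map_mxD. Qed.

Lemma intvecE (R : realFieldType) (n : nat) (v : 'cV[int]_n) (i : 'I_n) (j : 'I_1) :
  intvec R v i j = (v i j)%:~R.
Proof. exact: mxE. Qed.

Section RowSigns.
Variables (R : realFieldType) (n : nat) (L : 'M[R]_n).
Hypothesis L_offdiag : offdiag_nonpos L.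

Lemma mulmx_le0_off_support (v : 'cV[R]_n) (i : 'I_n) :
  (forall j, 0 <= v j 0) -> v i 0 = 0 -> (L *m v) i 0 <= 0.
Proof.
move=> v_ge0 vi0; rewrite mxE; apply: sumr_le0 => j _.
have [<-|ij] := eqVneq i j; first by rewrite vi0 mulr0.
by rewrite mulr_le0_ge0 ?L_offdiag.
Qed.

Hypothesis L_rowsum : rowsum_nonneg L.

Lemma mulmx_ge0_at_max (w : 'cV[R]_n) (i : 'I_n) :
  0 <= w i 0 -> (forall j, w j 0 <= w i 0) -> 0 <= (L *m w) i 0.
Proof.
move=> wi_ge0 w_le_wi; rewrite mxE.
apply: (@le_trans _ _ (\sum_j L i j * w i 0)).
  by rewrite -mulr_suml mulr_ge0 ?L_rowsum.
apply: ler_sum => j _.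
have [<-|ij] := eqVneq i j; first by [].
by rewrite ler_wnM2l ?L_offdiag.
Qed.

End RowSigns.

Lemma nonneg_vec_max (n : nat) (z : 'cV[int]_n) :
  nonneg_vec z -> z != 0 -> exists2 k, 0 < z k 0 & forall j, z j 0 <= z k 0.
Proof.
move=> z_ge0 z_neq0.
have [i0 zi0] : exists i, z i 0 != 0.
  apply/existsP; apply: contraNT z_neq0 => /existsPn z0.
  by apply/eqP/matrixP => i j; rewrite ord1 mxE; apply/eqP/negPn.
case: (arg_maxP (fun i => z i 0) (isT : predT i0)) => k _ z_le_zk.
exists k => [|j]; last exact: z_le_zk.
by rewrite (lt_le_trans _ (z_le_zk i0 isT)) // lt_def zi0 z_ge0.
Qed.

Definition level_indicator (n : nat) (z : 'cV[int]_n) (m : int) : 'cV[int]_n :=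
  \col_j (z j 0 == m)%:R.

Section LevelIndicator.
Variables (n : nat) (z : 'cV[int]_n) (m : int).
Let chi := level_indicator z m.

Lemma level_indicator01 (j : 'I_n) : chi j 0 = 0 \/ chi j 0 = 1.
Proof. by rewrite mxE; case: (z j 0 == m); [right | left]. Qed.

Lemma level_indicator_neq0 (k : 'I_n) : z k 0 = m -> chi != 0.
Proof.
move=> zk; apply/eqP => /matrixP/(_ k 0)/eqP.
by rewrite !mxE zk eqxx oner_eq0.
Qed.

Lemma level_indicator_off (j : 'I_n) : z j 0 != m -> chi j 0 = 0.
Proof. by rewrite mxE => /negbTE ->. Qed.

Lemma sub_level_indicator_max (i : 'I_n) :
  (forall j, z j 0 <= m) -> z i 0 = m ->
  forall j, (z - chi) j 0 <= (z - chi) i 0.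
Proof.
move=> z_le_m zi j; rewrite !mxE zi eqxx.
have [->|zj] := eqVneq (z j 0) m; first by [].
by rewrite subr0 -ltzD1 subrK lt_neqAle zj z_le_m.
Qed.

End LevelIndicator.

Theorem mainTheorem4 (R : realFieldType) (n : nat) (L : 'M[R]_n)
  (f : 'cV[int]_n) :
  offdiag_nonpos L -> rowsum_nonneg L -> nonneg_vec f ->
  chi_superstable L f -> z_superstable L f.
Proof.
move=> L_offdiag L_rowsum f_ge0 [_ chi_sstab]; split=> // z z_ge0 z_neq0.
have [k m_gt0 z_le_m] := nonneg_vec_max z_ge0 z_neq0.
set m := z k 0; set chi := level_indicator z m.
have [i fi_lt] := chi_sstab chi (level_indicator01 z m) (level_indicator_neq0 (erefl m)).
exists i.
have zi : z i 0 = m.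
  apply/eqP; apply: contraTT fi_lt => /level_indicator_off chi_i0.
  rewrite -leNgt subr_ge0 (@le_trans _ _ 0) ?ler0z ?f_ge0 //.
  apply: mulmx_le0_off_support => [//|j|]; rewrite intvecE ?chi_i0 // ler0z.
  by case: (level_indicator01 z m j) => ->.
apply: le_lt_trans fi_lt; rewrite lerD2l lerN2.
rewrite -[z](subrK chi) intvecD mulmxDr [leRHS]mxE lerDr.
apply: mulmx_ge0_at_max => // [|j]; rewrite !intvecE ?ler0z ?ler_int.
  by rewrite !mxE zi eqxx subr_ge0 -gtz0_ge1.
exact: sub_level_indicator_max.
Qed.
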